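(* Let $A$ be a complete local algebra over an algebraically closed field $k$, with maximal ideal $\mathfrak m$ such that $\mathfrak m/\mathfrak m^2$ is finite-dimensional. Let $\phi$ be an automorphism of $A$. Suppose there exists an integer $n$ such that for all $n'\ge n$, no product of $n'$ (not necessarily distinct) eigenvalues of $\phi$ on $\mathfrak m/\mathfrak m^2$ is an eigenvalue of $\phi$ on $\mathfrak m/\mathfrak m^2$. Then there exist a $k$-vector space $V$ with an automorphism $\phi_V$ and a map $V\to\mathfrak m$ intertwining $\phi_V$ and $\phi$, such that the composite $V\to\mathfrak m\to\mathfrak m/\mathfrak m^2$ is surjective. *)

From HB Require Import structures.
From mathcomp Require Import all_boot all_order all_algebra.
Set Implicit Arguments. Unset Strict Implicit. Unset Printing Implicit Defensive.
Import Order.TTheory GRing.Theory Num.Theory.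
Local Open Scope ring_scope.

Section LocalAlg.
Variables (k : fieldType) (A : comAlgType k).

Definition is_unit (x : A) : Prop := exists y : A, x * y = 1.

(* the maximal ideal (when A is local): the set of non-units *)
Definition maxideal (x : A) : Prop := ~ is_unit x.

(* A is local: its non-units form an ideal (closed under sums; closure under
   multiplication by arbitrary elements is automatic in a commutative ring). *)
Definition is_local : Prop :=
  forall x y : A, maxideal x -> maxideal y -> maxideal (x + y).

Fixpoint idpow (I : A -> Prop) (n : nat) : A -> Prop :=
  match n with
  | 0 => fun _ => True
  | n'.+1 => fun x => exists s : seq (A * A),
      (forall p, p \in s -> I p.1 /\ idpow I n' p.2) /\
      x = \sum_(p <- s) p.1 * p.2
  end.

Definition mpow (n : nat) : A -> Prop := idpow maxideal n.

Definition madic_complete : Prop :=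
  (forall x : A, (forall n, mpow n x) -> x = 0) /\
  (forall u : nat -> A, (forall n, mpow n (u n.+1 - u n)) ->
     exists a : A, forall n, mpow n (a - u n)).

Definition cotangent_findim : Prop :=
  exists (d : nat) (e : 'I_d -> A), (forall i, maxideal (e i)) /\
    forall x, maxideal x -> exists c : 'I_d -> k,
      mpow 2 (x - \sum_(i < d) c i *: e i).

Definition complete_local_fd : Prop :=
  is_local /\ madic_complete /\ cotangent_findim.

(* lam is an eigenvalue of the map induced by phi on m/m^2:
   some class [x] <> 0 (x in m, x notin m^2) with phi [x] = lam [x] *)
Definition cot_eigenvalue (phi : A -> A) (lam : k) : Prop :=
  exists x : A, maxideal x /\ ~ mpow 2 x /\ mpow 2 (phi x - lam *: x).

End LocalAlg.

From HB Require Import structures.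
From mathcomp Require Import all_boot all_order all_algebra.
From Stdlib Require Import Classical IndefiniteDescription.
Set Implicit Arguments. Unset Strict Implicit. Unset Printing Implicit Defensive.
Import Order.TTheory GRing.Theory Num.Theory.
Local Open Scope ring_scope.

(* Let [rs] be the eigenvalues of [phi] on m/m^2, so that the product of the
   [phi - r], r in [rs], maps m into m^2.  The twisted Leibniz rule
     (phi - x y)(a b) = (phi - x)(a) phi(b) + x a (phi - y)(b)
   shows that the products of j eigenvalues play the same role on m^j/m^(j+1).
   Let [psi] be the product of the [X - z] over the eigenvalues and over the
   products of fewer than n eigenvalues that are again eigenvalues, and [rho] the
   product over the remaining such products.  Then (psi rho)(phi) maps m into
   m^n, psi and rho are coprime, and psi(phi) is invertible on every m^j/m^(j+1),
   j >= n, because no product of j eigenvalues is an eigenvalue; by completeness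
   psi(phi) maps m^n onto itself.  A Bezout identity then moves every x in m,
   modulo m^2, into the kernel of psi(phi).  As psi is monic, the iterates
   phi^j(w_i), j < deg psi, of such lifts w_i of a spanning family of m/m^2 span
   a finite-dimensional phi-stable subspace, which is the required V. *)

Section BasisModulo.
Variables (k : fieldType) (V : lmodType k) (N T : V -> Prop).
Hypotheses (ND : forall x y, N x -> N y -> N (x + y))
  (NZ : forall (c : k) x, N x -> N (c *: x)).

Lemma exists_basis_modulo D (e : 'I_D -> V) : (forall i, T (e i)) ->
  (forall x, T x -> exists c : 'I_D -> k, N (x - \sum_i c i *: e i)) ->
  exists d (b : 'I_d -> V), [/\ forall i, T (b i),
    forall x, T x -> exists c : 'I_d -> k, N (x - \sum_i c i *: b i) &
    forall c : 'I_d -> k, N (\sum_i c i *: b i) -> forall i, c i = 0].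
Proof.
elim: D e => [|D IH] e eT espan; first by exists 0%N, e; split=> // c _ [].
have [indep | dep] :=
  classic (forall c : 'I_D.+1 -> k, N (\sum_i c i *: e i) -> forall i, c i = 0).
  by exists D.+1, e.
have [c [Nc [l cl_neq0]]] :
    exists c : 'I_D.+1 -> k, N (\sum_i c i *: e i) /\ exists l, c l <> 0.
  apply: NNPP => hn; apply: dep => c Nc i; apply: NNPP => ci_neq0.
  by apply: hn; exists c; split => //; exists i.
apply: (IH (fun j => e (lift l j))) => [j | x /espan [a Na]]; first exact: eT.
pose r := a l / c l.
exists (fun j => a (lift l j) - r * c (lift l j)).
suff -> : x - \sum_j (a (lift l j) - r * c (lift l j)) *: e (lift l j) =
    (x - \sum_i a i *: e i) + r *: \sum_i c i *: e i by apply: ND => //; apply: NZ.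
rewrite (bigD1_ord l) //= [X in _ = _ + r *: X](bigD1_ord l) //= scalerDr scalerA.
rewrite /r mulfVK; last exact/eqP.
under eq_bigr do rewrite scalerBl -scalerA.
rewrite sumrB -scaler_sumr.
set u := _ *: e l; set S := \sum_(i < D) _; set t := _ *: \sum_(i < D) _.
by rewrite [RHS]addrC addrA -(addrA u) (addrC u) addrKA opprB addrA (addrC x).
Qed.

End BasisModulo.

Section LinearCombination.
Variables (k : fieldType) (V : lmodType k) (r : nat) (g : 'I_r -> V).

Definition lincomb (v : 'rV[k]_r) : V := \sum_i v 0 i *: g i.

Fact lincomb_is_linear : linear lincomb.
Proof.
move=> a u v; rewrite /lincomb scaler_sumr -big_split; apply: eq_bigr => i _.
by rewrite !mxE scalerDl scalerA.
Qed.

HB.instance Definition _ :=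
  GRing.isLinear.Build k 'rV[k]_r V *:%R lincomb lincomb_is_linear.

Lemma lincomb_row (c : 'I_r -> k) : lincomb (\row_i c i) = \sum_i c i *: g i.
Proof. by apply: eq_bigr => i _; rewrite mxE. Qed.

Lemma lincomb_mulmx m (v : 'rV[k]_m) (M : 'M[k]_(m, r)) :
  lincomb (v *m M) = \sum_i v 0 i *: lincomb (row i M).
Proof.
rewrite /lincomb; under eq_bigr do rewrite mxE scaler_suml.
rewrite exchange_big /=; apply: eq_bigr => i _; rewrite scaler_sumr.
by apply: eq_bigr => j _; rewrite !mxE scalerA.
Qed.

End LinearCombination.

Section StableSpan.
Variables (k : fieldType) (V : lmodType k) (I : finType) (g : I -> V).

Definition inspan (x : V) : Prop := exists c : I -> k, x = \sum_i c i *: g i.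

Lemma inspan0 : inspan 0.
Proof. by exists (fun=> 0); rewrite big1 // => i _; rewrite scale0r. Qed.

Lemma inspanD x y : inspan x -> inspan y -> inspan (x + y).
Proof.
move=> [c ->] [c' ->]; exists (fun i => c i + c' i).
by rewrite -big_split; apply: eq_bigr => i _; rewrite scalerDl.
Qed.

Lemma inspanZ (a : k) x : inspan x -> inspan (a *: x).
Proof.
move=> [c ->]; exists (fun i => a * c i).
by rewrite scaler_sumr; apply: eq_bigr => i _; rewrite scalerA.
Qed.

Lemma inspan_sum (J : Type) (s : seq J) (P : pred J) (F : J -> V) :
  (forall j, P j -> inspan (F j)) -> inspan (\sum_(j <- s | P j) F j).
Proof. by apply: big_ind; [apply: inspan0 | apply: inspanD]. Qed.

Lemma inspan_gen i : inspan (g i).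
Proof.
exists (fun j => (j == i)%:R); rewrite (bigD1 i) //= eqxx scale1r big1 ?addr0 //.
by move=> j /negbTE ->; rewrite scale0r.
Qed.

Variable phi : {linear V -> V}.
Hypothesis phi_inj : injective phi.
Hypothesis phi_span : forall i, inspan (phi (g i)).

Lemma inspan_phi x : inspan x -> inspan (phi x).
Proof.
move=> [c ->]; rewrite linear_sum; apply: inspan_sum => i _.
by rewrite linearZ; apply: inspanZ.
Qed.

Lemma stable_span_matrix : exists r (phiV : 'M[k]_r) (b : 'I_r -> V),
  [/\ phiV \in unitmx, forall v, inspan (lincomb b v),
      forall v, lincomb b (v *m phiV) = phi (lincomb b v) &
      forall x, inspan x -> exists v, lincomb b v = x].
Proof.
have [r [b [b_span b_spanning b_free]]] :
    exists r (b : 'I_r -> V), [/\ forall i, inspan (b i),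
      forall x, inspan x -> exists c : 'I_r -> k, x - \sum_i c i *: b i = 0 &
      forall c : 'I_r -> k, \sum_i c i *: b i = 0 -> forall i, c i = 0].
  have ND (x y : V) : x = 0 -> y = 0 -> x + y = 0 by move=> -> ->; rewrite addr0.
  have NZ (c : k) (x : V) : x = 0 -> c *: x = 0 by move=> ->; rewrite scaler0.
  apply: (exists_basis_modulo ND NZ (e := g \o enum_val)) => [j | x [c ->]].
    exact: inspan_gen.
  exists (c \o enum_val); apply/eqP; rewrite subr_eq0.
  by apply/eqP; rewrite (reindex _ (onW_bij _ (enum_val_bij _))).
have /fin_all_exists[C phi_b] i : exists v, lincomb b v = phi (b i).
  have [c /eqP] := b_spanning _ (inspan_phi (b_span i)).
  by rewrite subr_eq0 => /eqP ->; exists (\row_j c j); rewrite lincomb_row.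
pose phiV := \matrix_i C i.
have phiVP v : lincomb b (v *m phiV) = phi (lincomb b v).
  rewrite lincomb_mulmx linear_sum; apply: eq_bigr => i _.
  by rewrite rowK phi_b linearZ.
exists r, phiV, b; split => //.
- rewrite unitmxE unitfE; apply/negP => /det0P[v /eqP v_neq0 v_ker].
  have : lincomb b v = 0 by apply: phi_inj; rewrite -phiVP v_ker !linear0.
  rewrite /lincomb => /b_free v0; apply: v_neq0; apply/rowP => i.
  by rewrite !mxE v0.
- by move=> v; apply: inspan_sum => i _; apply: inspanZ.
- move=> x /b_spanning[c /eqP]; rewrite subr_eq0 => /eqP ->.
  by exists (\row_i c i); rewrite lincomb_row.
Qed.

End StableSpan.

Section IdealPowers.
Variables (k : fieldType) (A : comAlgType k).

Lemma maxidealMr (x y : A) : maxideal x -> maxideal (x * y).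
Proof. by move=> hx [z hz]; apply: hx; exists (y * z); rewrite mulrA. Qed.

Lemma maxideal0 : maxideal (0 : A).
Proof. by case=> z /eqP; rewrite mul0r eq_sym oner_eq0. Qed.

Lemma mpow0 n : mpow n (0 : A).
Proof. by case: n => //= n; exists [::]; rewrite big_nil. Qed.

Lemma mpowD n (x y : A) : mpow n x -> mpow n y -> mpow n (x + y).
Proof.
case: n => //= n [s [hs ->]] [t [ht ->]]; exists (s ++ t); split.
  by move=> p; rewrite mem_cat => /orP[/hs|/ht].
by rewrite big_cat.
Qed.

Lemma mpowMr n (x y : A) : mpow n x -> mpow n (x * y).
Proof.
elim: n x => // n IH x /= [s [hs ->]].
exists [seq (p.1, p.2 * y) | p <- s]; split.
  by move=> _ /mapP[p /hs[h1 h2] ->]; split => //; apply: IH.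
by rewrite big_map mulr_suml; apply: eq_bigr => p _; rewrite mulrA.
Qed.

Lemma mpowMl n (x y : A) : mpow n y -> mpow n (x * y).
Proof. by rewrite mulrC; apply: mpowMr. Qed.

Lemma mpowZ n (c : k) (x : A) : mpow n x -> mpow n (c *: x).
Proof. by rewrite -mulr_algl; apply: mpowMl. Qed.

Lemma mpowN n (x : A) : mpow n x -> mpow n (- x).
Proof. by rewrite -scaleN1r; apply: mpowZ. Qed.

Lemma mpowB n (x y : A) : mpow n x -> mpow n y -> mpow n (x - y).
Proof. by move=> hx /mpowN; apply: mpowD. Qed.

Lemma mpow_sum n (I : Type) (r : seq I) (P : pred I) (F : I -> A) :
  (forall i, P i -> mpow n (F i)) -> mpow n (\sum_(i <- r | P i) F i).
Proof. by apply: big_ind; [apply: mpow0 | apply: mpowD]. Qed.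

Lemma mpowM i j (x y : A) : mpow i x -> mpow j y -> mpow (i + j) (x * y).
Proof.
elim: i x => [|i IH] x /=; first by move=> _; apply: mpowMl.
move=> [s [hs ->]] hy; exists [seq (p.1, p.2 * y) | p <- s]; split.
  by move=> _ /mapP[p /hs[h1 h2] ->]; split => //; apply: IH.
by rewrite big_map mulr_suml; apply: eq_bigr => p _; rewrite mulrA.
Qed.

Lemma mpow_le m n (x : A) : (m <= n)%N -> mpow n x -> mpow m x.
Proof.
elim: n m x => [|n IH] [|m] x //= lemn [s [hs ->]]; exists s; split => //.
by move=> p /hs[h1 h2]; split => //; apply: IH h2.
Qed.

Hypothesis Aloc : is_local A.

Lemma mpow1P (x : A) : mpow 1 x <-> maxideal x.
Proof.
split=> [[s [hs ->]] | hx].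
  rewrite big_seq; apply: big_ind => [||p /hs[] /maxidealMr //].
    exact: maxideal0.
  exact: Aloc.
exists [:: (x, 1)]; split; first by move=> p; rewrite inE => /eqP ->.
by rewrite big_seq1 mulr1.
Qed.

End IdealPowers.

Section PolynomialAction.
Variables (k : fieldType) (A : comAlgType k).
Variable phi : {lrmorphism A -> A}.
Hypothesis phi_bij : bijective phi.

Lemma maxideal_phi (x : A) : maxideal x -> maxideal (phi x).
Proof.
move=> hx [y hy]; apply: hx; case: phi_bij => g gK Kg; exists (g y).
by apply: (bij_inj phi_bij); rewrite rmorphM rmorph1 -hy; congr (_ * _); exact: Kg.
Qed.

Lemma mpow_phi n (x : A) : mpow n x -> mpow n (phi x).
Proof.
elim: n x => // n IH x /= [s [hs ->]].
exists [seq (phi p.1, phi p.2) | p <- s]; split.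
  by move=> _ /mapP[p /hs[h1 h2] ->]; split; [apply: maxideal_phi | apply: IH].
by rewrite big_map rmorph_sum; apply: eq_bigr => p _; rewrite rmorphM.
Qed.

Definition pact (p : {poly k}) (x : A) : A := \sum_(i < size p) p`_i *: iter i phi x.

Fact pact_is_linear p : linear (pact p).
Proof.
move=> a x y; have iterP j : iter j phi (a *: x + y) = a *: iter j phi x + iter j phi y.
  by elim: j => //= j ->; rewrite linearP.
rewrite /pact scaler_sumr -big_split; apply: eq_bigr => i _.
by rewrite iterP scalerDr !scalerA mulrC.
Qed.

HB.instance Definition _ p := GRing.isLinear.Build k A A *:%R (pact p) (pact_is_linear p).

Lemma pact_widen N (p : {poly k}) (x : A) : (size p <= N)%N ->
  pact p x = \sum_(i < N) p`_i *: iter i phi x.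
Proof.
move=> hN; rewrite /pact (big_ord_widen N (fun i => p`_i *: iter i phi x) hN).
rewrite big_mkcond; apply: eq_bigr => i _; case: ltnP => // /(nth_default 0) ->.
by rewrite scale0r.
Qed.

Lemma pactDl (p q : {poly k}) (x : A) : pact (p + q) x = pact p x + pact q x.
Proof.
pose N := maxn (size p) (size q).
have hpq : (size (p + q)%R <= N)%N by apply: leq_trans (size_polyD _ _) _.
rewrite (pact_widen _ (leq_maxl _ _ : size p <= N)%N).
rewrite (pact_widen _ (leq_maxr _ _ : size q <= N)%N).
by rewrite (pact_widen _ hpq) -big_split; apply: eq_bigr => i _; rewrite coefD scalerDl.
Qed.

Lemma pactZl (c : k) (p : {poly k}) (x : A) : pact (c *: p) x = c *: pact p x.
Proof.
rewrite (pact_widen _ (size_scale_leq c p)) /pact scaler_sumr.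
by apply: eq_bigr => i _; rewrite coefZ scalerA.
Qed.

Lemma pact1 (x : A) : pact 1 x = x.
Proof. by rewrite /pact size_poly1 big_ord1 coef1 scale1r. Qed.

Lemma pactMX (p : {poly k}) (x : A) : pact (p * 'X) x = phi (pact p x).
Proof.
have hN : (size (p * 'X)%R <= (size p).+1)%N.
  by apply: leq_trans (size_polyMleq _ _) _; rewrite size_polyX addn2.
rewrite (pact_widen _ hN) big_ord_recl coefMX eqxx scale0r add0r /pact linear_sum.
by apply: eq_bigr => i _; rewrite coefMX /= linearZ.
Qed.

Lemma pactC (c : k) (x : A) : pact c%:P x = c *: x.
Proof. by rewrite -alg_polyC pactZl pact1. Qed.

Lemma pactM (p q : {poly k}) (x : A) : pact (p * q) x = pact p (pact q x).
Proof.
elim/poly_ind: p => [|p c IH]; first by rewrite mul0r /pact size_poly0 !big_ord0.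
by rewrite mulrDl mulrAC pactDl pactMX IH mul_polyC pactZl pactDl pactMX pactC.
Qed.

Lemma pactX (x : A) : pact 'X x = phi x.
Proof. by rewrite -['X]mul1r pactMX pact1. Qed.

Lemma pactXsubC (c : k) (x : A) : pact ('X - c%:P) x = phi x - c *: x.
Proof. by rewrite -polyCN pactDl pactX pactC scaleNr. Qed.

Lemma pact_comm (p q : {poly k}) (x : A) : pact p (pact q x) = pact q (pact p x).
Proof. by rewrite -!pactM mulrC. Qed.

Lemma pact_phi (p : {poly k}) (x : A) : pact p (phi x) = phi (pact p x).
Proof. by rewrite -pactX pact_comm pactX. Qed.

Lemma mpow_pact (p : {poly k}) n (x : A) : mpow n x -> mpow n (pact p x).
Proof.
move=> hx; apply: mpow_sum => i _; apply: mpowZ.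
by elim: (nat_of_ord i) => //= j IH; apply: mpow_phi.
Qed.

End PolynomialAction.

Definition poly_of_roots (k : fieldType) (s : seq k) : {poly k} :=
  \prod_(z <- s) ('X - z%:P).

Lemma coprimep_poly_of_roots (k : fieldType) (s1 s2 : seq k) :
  {in s2, forall z, z \notin s1} -> coprimep (poly_of_roots s1) (poly_of_roots s2).
Proof.
elim: s2 => [|z s2 IH] s12; first by rewrite /poly_of_roots big_nil coprimep1.
rewrite /poly_of_roots big_cons coprimepMr coprimep_XsubC root_prod_XsubC.
by rewrite s12 ?mem_head // IH // => y ys; apply: s12; rewrite inE ys orbT.
Qed.

(* [prods rs j] lists the products of [j.+1] entries of [rs]. *)
Fixpoint prods (k : fieldType) (rs : seq k) (j : nat) : seq k :=
  if j is j'.+1 then [seq x * y | x <- rs, y <- prods rs j'] else rs.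

Fixpoint prods_upto (k : fieldType) (rs : seq k) (J : nat) : seq k :=
  if J is J'.+1 then prods_upto rs J' ++ prods rs J' else [::].

Lemma mem_prods (k : fieldType) (rs : seq k) j z : z \in prods rs j ->
  exists2 ls : seq k, size ls = j.+1 /\ {subset ls <= rs} & z = \prod_(l <- ls) l.
Proof.
elim: j z => [|j IH] z /=.
  by move=> zrs; exists [:: z]; [split=> // l; rewrite inE => /eqP -> | rewrite big_seq1].
case/allpairsP => -[x y] /= [xrs /IH[ls [sz sub] ->] ->].
exists (x :: ls); last by rewrite big_cons.
by split=> [|l]; [rewrite /= sz | rewrite inE => /predU1P[->|/sub]].
Qed.

Section GradedEigenvalues.
Variables (k : fieldType) (A : comAlgType k).
Hypothesis Aloc : is_local A.
Variable phi : {lrmorphism A -> A}.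
Hypothesis phi_bij : bijective phi.
Local Notation pact := (pact phi).

Lemma pactXsubC_mul (x y : k) (a b : A) :
  pact ('X - (x * y)%:P) (a * b) =
  pact ('X - x%:P) a * phi b + x *: (a * pact ('X - y%:P) b).
Proof.
rewrite !pactXsubC rmorphM mulrBl mulrBr scalerBr -scalerAl -scalerAr scalerA.
by rewrite addrA subrK.
Qed.

Lemma mpow_pact_roots_allpairs i j (al bl : seq k) (a b : A) :
  mpow i a -> mpow i.+1 (pact (poly_of_roots al) a) ->
  mpow j b -> mpow j.+1 (pact (poly_of_roots bl) b) ->
  mpow (i + j).+1 (pact (poly_of_roots [seq x * y | x <- al, y <- bl]) (a * b)).
Proof.
rewrite /poly_of_roots big_allpairs_dep /=.
elim: al a bl b => [|x al IHal] a bl b ha hpa hb hpb.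
  by rewrite big_nil pact1 -addSn; apply: mpowM; rewrite big_nil pact1 in hpa.
elim: bl b hb hpb => [|y bl IHbl] b hb hpb.
  rewrite big1 => [|x' _]; last by rewrite big_nil.
  by rewrite pact1 -addnS; apply: mpowM; rewrite big_nil pact1 in hpb.
set Px := \prod_(y' <- bl) ('X - (x * y')%:P).
set Py := \prod_(x' <- al) ('X - (x' * y)%:P).
set R := \prod_(x' <- al) \prod_(y' <- bl) ('X - (x' * y')%:P).
have Qx_bl : \prod_(x' <- x :: al) \prod_(y' <- bl) ('X - (x' * y')%:P) = Px * R.
  by rewrite big_cons.
have Qal_y : \prod_(x' <- al) \prod_(y' <- y :: bl) ('X - (x' * y')%:P) = Py * R.
  by rewrite -big_split; apply: eq_bigr => x' _; rewrite big_cons.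
rewrite big_cons big_cons -mulrA mulrC pactM pactXsubC_mul linearD linearZ /=.
apply: mpowD; last apply: mpowZ.
  rewrite pactM; apply: mpow_pact => //; apply: IHal.
  - exact: mpow_pact.
  - by move: hpa; rewrite big_cons pactM pact_comm.
  - exact: mpow_phi.
  - by rewrite pact_phi; apply: mpow_phi.
rewrite Qal_y mulrCA -Qx_bl pactM; apply: mpow_pact => //; apply: IHbl.
- exact: mpow_pact.
- by move: hpb; rewrite big_cons pactM pact_comm.
Qed.

Variable rs : seq k.
Hypothesis pact_rs : forall x : A, maxideal x -> mpow 2 (pact (poly_of_roots rs) x).

Lemma mpow_pact_prods j (x : A) :
  mpow j.+1 x -> mpow j.+2 (pact (poly_of_roots (prods rs j)) x).
Proof.
elim: j x => [|j IH] x; first by move/(mpow1P Aloc); apply: pact_rs.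
move=> [s [hs ->]]; rewrite linear_sum big_seq; apply: mpow_sum => p /hs[hp1 hp2].
apply: (mpow_pact_roots_allpairs (i := 1)) => //; last exact: IH.
  exact/(mpow1P Aloc).
exact: pact_rs.
Qed.

Lemma mpow_pact_prods_upto J (x : A) :
  maxideal x -> mpow J.+1 (pact (poly_of_roots (prods_upto rs J)) x).
Proof.
move=> x_m; elim: J => [|J IH] /=.
  by rewrite /poly_of_roots big_nil pact1; apply/(mpow1P Aloc).
by rewrite /poly_of_roots big_cat /= mulrC pactM; apply: mpow_pact_prods.
Qed.

End GradedEigenvalues.

Section Completion.
Variables (k : fieldType) (A : comAlgType k).
Hypothesis Acomp : madic_complete A.
Variable phi : {lrmorphism A -> A}.
Hypothesis phi_bij : bijective phi.
Local Notation pact := (pact phi).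
Variables (psi : {poly k}) (n : nat).
Hypothesis psi_graded_unit : forall j, (n <= j)%N -> exists2 P : {poly k},
  coprimep psi P & forall x : A, mpow j x -> mpow j.+1 (pact P x).

Lemma pact_graded_inverse j : (n <= j)%N -> exists u : {poly k},
  forall t : A, mpow j t -> mpow j.+1 (pact psi (pact u t) - t).
Proof.
move=> /psi_graded_unit[P /Bezout_eq1_coprimepP[[u v] /= uv1] hP].
exists u => t ht; rewrite -pactM mulrC.
have -> : pact (u * psi) t - t = - pact (v * P) t.
  by rewrite -{2}[t](pact1 phi) -uv1 pactDl opprD addrA subrr sub0r.
by apply: mpowN; rewrite pactM; apply: mpow_pact => //; apply: hP.
Qed.

Lemma pact_onto (t : A) : mpow n t -> exists2 s, mpow n s & pact psi s = t.
Proof.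
move=> ht; have /functional_choice[u hu] N := pact_graded_inverse (leq_addl N n).
pose fix s N := if N is N'.+1 then s N' + pact (u N') (t - pact psi (s N')) else 0.
have s_err N : mpow (N + n) (t - pact psi (s N)).
  elim: N => [|N IH] /=; first by rewrite linear0 subr0.
  by rewrite linearD opprD addrA -opprB; apply: mpowN; apply: hu.
have s_step N : mpow (N + n) (s N.+1 - s N) by rewrite /= addrC addKr; apply: mpow_pact.
have s_n N : mpow n (s N).
  elim: N => [|N IH]; first exact: mpow0.
  rewrite -(subrK (s N) (s N.+1)); apply: mpowD => //.
  by apply: mpow_le _ (s_step N); rewrite leq_addl.
case: Acomp => sep /(_ s (fun N => mpow_le (leq_addr n N) (s_step N)))[a ha].
exists a; first by rewrite -(subrK (s n) a); apply: mpowD.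
apply/eqP; rewrite eq_sym -subr_eq0; apply/eqP; apply: sep => N.
have -> : t - pact psi a = (t - pact psi (s N)) - pact psi (a - s N).
  by rewrite linearB opprB addrA subrK.
by apply: mpowB; [apply: mpow_le _ (s_err N); rewrite leq_addr | apply: mpow_pact].
Qed.

End Completion.

Section Lifting.
Variables (k : fieldType) (A : comAlgType k).
Hypothesis Aloc : is_local A.
Variable phi : {lrmorphism A -> A}.
Hypothesis phi_bij : bijective phi.
Local Notation pact := (pact phi).
Variables (psi rho : {poly k}) (n : nat).
Hypotheses (n_ge2 : (2 <= n)%N) (psi_rho_coprime : coprimep psi rho).
Hypothesis pact_psi : forall x : A, maxideal x -> mpow 2 (pact psi x).
Hypothesis pact_psi_rho : forall x : A, maxideal x -> mpow n (pact (psi * rho) x).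
Hypothesis psi_onto : forall t : A, mpow n t -> exists2 s, mpow n s & pact psi s = t.

(* Bezout splits [x] as [u psi x + v rho x]; the first summand is in m^2, and
   [psi] kills the second one up to an element of m^n, which can be corrected. *)
Lemma lift_to_kernel (x : A) : maxideal x ->
  exists w, [/\ maxideal w, pact psi w = 0 & mpow 2 (x - w)].
Proof.
move=> x_m; have /Bezout_eq1_coprimepP[[u v] /= uv1] := psi_rho_coprime.
pose y := pact v (pact rho x).
have [s s_n psi_s] : exists2 s, mpow n s & pact psi s = pact psi y.
  apply: psi_onto; rewrite pact_comm -(pactM _ psi rho).
  by apply: mpow_pact => //; apply: pact_psi_rho.
have s_m : mpow 1 s by apply: mpow_le s_n; apply: ltnW.
exists (y - s); split.
- apply/(mpow1P Aloc); apply: mpowB => //; do 2!apply: mpow_pact => //.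
  exact/(mpow1P Aloc).
- by rewrite linearB /= psi_s subrr.
- have -> : x - (y - s) = pact u (pact psi x) + s.
    by rewrite -{1}[x](pact1 phi) -uv1 pactDl !pactM -/y opprB addrA addrAC addrK.
  apply: mpowD; first by apply: mpow_pact => //; apply: pact_psi.
  exact: mpow_le s_n.
Qed.

End Lifting.

Section AnnihilatedLifts.
Variables (k : fieldType) (A : comAlgType k).
Hypotheses (Aloc : is_local A) (Acomp : madic_complete A).
Variable phi : {lrmorphism A -> A}.
Hypothesis phi_bij : bijective phi.
Local Notation pact := (pact phi).
Variable rs : seq k.
Hypothesis pact_rs : forall x : A, maxideal x -> mpow 2 (pact (poly_of_roots rs) x).
Variable n : nat.
Hypothesis n_ge2 : (2 <= n)%N.
Hypothesis prods_notin : forall j z, (n <= j.+1)%N -> z \in prods rs j -> z \notin rs.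

Lemma exists_annihilated_lifts : exists2 psi : {poly k}, psi \is monic &
  forall x : A, maxideal x -> exists w, [/\ maxideal w, pact psi w = 0 & mpow 2 (x - w)].
Proof.
pose Q := prods_upto rs n.-1.
pose psi := poly_of_roots (rs ++ [seq z <- Q | z \in rs]).
pose rho := poly_of_roots [seq z <- Q | z \notin rs].
have psi_roots z : z \in rs ++ [seq z <- Q | z \in rs] -> z \in rs.
  by rewrite mem_cat mem_filter => /orP[|/andP[]].
exists psi; first exact: monic_prod_XsubC.
apply: (lift_to_kernel Aloc phi_bij (rho := rho) n_ge2).
- apply: coprimep_poly_of_roots => z; rewrite mem_filter => /andP[z_rs _].
  exact: contra (psi_roots z) z_rs.
- move=> x /pact_rs; rewrite /psi /poly_of_roots big_cat /= mulrC pactM.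
  exact: mpow_pact.
- move=> x x_m; have -> : psi * rho = poly_of_roots rs * poly_of_roots Q.
    rewrite /psi /rho /poly_of_roots big_cat /= -mulrA !big_filter.
    by rewrite [\prod_(z <- Q) _](bigID (fun z => z \in rs)).
  rewrite pactM; apply: mpow_pact => //.
  have := mpow_pact_prods_upto Aloc phi_bij pact_rs n.-1 x_m.
  by rewrite (ltn_predK n_ge2).
move=> t; apply: (pact_onto Acomp phi_bij) => -[|j] j_ge_n.
  by have := leq_trans n_ge2 j_ge_n.
exists (poly_of_roots (prods rs j)); last exact: mpow_pact_prods.
apply: coprimep_poly_of_roots => z /(prods_notin j_ge_n).
by apply: contra; apply: psi_roots.
Qed.

End AnnihilatedLifts.

Section Cotangent.
Variables (k : closedFieldType) (A : comAlgType k).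
Hypothesis Aloc : is_local A.
Variable phi : {lrmorphism A -> A}.
Hypothesis phi_bij : bijective phi.
Local Notation pact := (pact phi).
Variables (d : nat) (e : 'I_d.+1 -> A).
Hypothesis e_m : forall i, maxideal (e i).
Hypothesis e_span : forall x : A, maxideal x ->
  exists c : 'I_d.+1 -> k, mpow 2 (x - \sum_i c i *: e i).
Hypothesis e_free :
  forall c : 'I_d.+1 -> k, mpow 2 (\sum_i c i *: e i) -> forall i, c i = 0.

Lemma cotangent_matrix : exists M : 'M[k]_d.+1,
  forall v, mpow 2 (phi (lincomb e v) - lincomb e (v *m M)).
Proof.
have /fin_all_exists[C phi_e] i : exists v, mpow 2 (phi (e i) - lincomb e v).
  have [c] := e_span (maxideal_phi phi_bij (@e_m i)).
  by exists (\row_j c j); rewrite lincomb_row.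
exists (\matrix_i C i) => v; rewrite lincomb_mulmx {1}/lincomb linear_sum -sumrB.
by apply: mpow_sum => i _; rewrite rowK linearZ -scalerBr; apply: mpowZ; apply: phi_e.
Qed.

Variable M : 'M[k]_d.+1.
Hypothesis phi_M : forall v, mpow 2 (phi (lincomb e v) - lincomb e (v *m M)).

Lemma pact_lincomb (p : {poly k}) v :
  mpow 2 (pact p (lincomb e v) - lincomb e (v *m horner_mx M p)).
Proof.
elim/poly_ind: p => [|p c IH].
  by rewrite /pact size_poly0 big_ord0 rmorph0 mulmx0 linear0 subr0; apply: mpow0.
rewrite pactDl pactMX pactC rmorphD rmorphM /= horner_mx_X horner_mx_C.
rewrite -mulmxE mulmxDr mulmxA mul_mx_scalar linearD linearZ /=.
set P := pact p _; set H := horner_mx M p.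
have -> : phi P + c *: lincomb e v - (lincomb e (v *m H *m M) + c *: lincomb e v) =
    phi (P - lincomb e (v *m H)) + (phi (lincomb e (v *m H)) - lincomb e (v *m H *m M)).
  by rewrite linearB addrA subrK [lincomb e _ + _]addrC addrKA.
by apply: mpowD; [apply: mpow_phi | apply: phi_M].
Qed.

Lemma cotangent_eigenvalues : exists2 rs : seq k,
  forall x : A, maxideal x -> mpow 2 (pact (poly_of_roots rs) x) &
  {in rs, forall z, cot_eigenvalue phi z}.
Proof.
have [rs char_rs] := closed_field_poly_normal (char_poly M).
rewrite (monicP (char_poly_monic M)) scale1r -/(poly_of_roots rs) in char_rs.
exists rs => [x /e_span[c x_c] | z z_rs].
  rewrite -(subrK (lincomb e (\row_i c i)) x) linearD /=; apply: mpowD.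
    by apply: (mpow_pact phi_bij); rewrite lincomb_row.
  have := pact_lincomb (poly_of_roots rs) (\row_i c i).
  by rewrite -char_rs Cayley_Hamilton mulmx0 linear0 subr0.
have /eigenvalueP[v Mv /eqP v_neq0] : eigenvalue M z.
  by rewrite eigenvalue_root_char char_rs root_prod_XsubC.
exists (lincomb e v); split; [|split].
- by apply/(mpow1P Aloc); apply: mpow_sum => i _; apply: mpowZ; apply/(mpow1P Aloc).
- move=> /e_free v0; apply: v_neq0; apply/rowP => i; rewrite !mxE; exact: v0.
- by have := phi_M v; rewrite Mv linearZ.
Qed.

End Cotangent.

Lemma cotangent_roots (k : closedFieldType) (A : comAlgType k)
    (phi : {lrmorphism A -> A}) :
  is_local A -> bijective phi -> cotangent_findim A ->
  exists2 rs : seq k, forall x : A, maxideal x -> mpow 2 (pact phi (poly_of_roots rs) x) &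
    {in rs, forall z, cot_eigenvalue phi z}.
Proof.
move=> Aloc phi_bij [D [e0 [e0_m e0_span]]].
have [[|d] [e [e_m e_span e_free]]] :=
  exists_basis_modulo (@mpowD k A 2) (@mpowZ k A 2) e0_m e0_span.
  exists [::] => [x /e_span[c] | //].
  by rewrite big_ord0 subr0 /poly_of_roots big_nil pact1.
have [M phi_M] := cotangent_matrix phi_bij e_m e_span.
exact: (cotangent_eigenvalues Aloc phi_bij e_m e_span e_free phi_M).
Qed.

Section AnnihilatedSpan.
Variables (k : fieldType) (A : comAlgType k).
Hypothesis Aloc : is_local A.
Variable phi : {lrmorphism A -> A}.
Hypothesis phi_bij : bijective phi.
Local Notation pact := (pact phi).
Variable psi : {poly k}.
Hypothesis psi_monic : psi \is monic.

Lemma iter_size_pred (x : A) : pact psi x = 0 ->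
  iter (size psi).-1 phi x = - \sum_(j < (size psi).-1) psi`_j *: iter j phi x.
Proof.
have size_psi : size psi = (size psi).-1.+1 by rewrite prednK // size_poly_gt0 monic_neq0.
rewrite (pact_widen _ _ (eq_leq size_psi)) big_ord_recr /= -lead_coefE.
by rewrite (monicP psi_monic) scale1r => /eqP; rewrite addrC addr_eq0 => /eqP.
Qed.

Variables (d : nat) (w : 'I_d -> A).
Hypothesis w_m : forall i, maxideal (w i).
Hypothesis psi_w : forall i, pact psi (w i) = 0.

Definition iterates (p : 'I_(size psi) * 'I_d) : A := iter p.1 phi (w p.2).

Lemma inspan_iterates_iter j i : (j < size psi)%N -> inspan iterates (iter j phi (w i)).
Proof. by move=> lt_j; apply: (inspan_gen _ (Ordinal lt_j, i)). Qed.

Lemma inspan_iterates_phi p : inspan iterates (phi (iterates p)).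
Proof.
case: p => -[j lt_j] i; rewrite /iterates /= -iterS.
have [lt_j1 | ge_j1] := ltnP j.+1 (size psi); first exact: inspan_iterates_iter.
have j_eq : j = (size psi).-1.
  by rewrite -(@anti_leq j.+1 (size psi)) // lt_j ge_j1.
rewrite iterS j_eq iter_size_pred // linearN linear_sum -sumrN /=.
apply: inspan_sum => l _; rewrite linearZ -scaleNr -iterS.
by apply/inspanZ/inspan_iterates_iter; rewrite -ltn_predRL.
Qed.

Lemma annihilated_span_matrix : exists r (phiV : 'M[k]_r) (b : 'I_r -> A),
  [/\ phiV \in unitmx, forall v, maxideal (lincomb b v),
      forall v, lincomb b (v *m phiV) = phi (lincomb b v) &
      forall c : 'I_d -> k, exists v, lincomb b v = \sum_i c i *: w i].
Proof.
have [r [phiV [b [phiV_unit b_span phiVP b_onto]]]] :=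
  stable_span_matrix (bij_inj phi_bij) inspan_iterates_phi.
exists r, phiV, b; split => // [v | c].
  have [c ->] := b_span v; apply/(mpow1P Aloc); apply: mpow_sum => p _; apply: mpowZ.
  rewrite /iterates; elim: (nat_of_ord p.1) => [|j IH] /=; last exact: mpow_phi.
  by apply/(mpow1P Aloc); apply: w_m.
apply: b_onto; apply: inspan_sum => i _; apply: inspanZ.
by apply: (@inspan_iterates_iter 0 i); rewrite size_poly_gt0 monic_neq0.
Qed.

End AnnihilatedSpan.

Theorem mainTheorem16 (k : closedFieldType) (A : comAlgType k)
  (hA : complete_local_fd A)
  (phi : {lrmorphism A -> A}) (phi_bij : bijective phi)
  (hres : exists n : nat, forall n' : nat, (n <= n')%N ->
     forall ls : seq k, size ls = n' ->
       (forall l, l \in ls -> cot_eigenvalue phi l) ->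
       ~ cot_eigenvalue phi (\prod_(l <- ls) l)) :
  exists (d : nat) (phiV : 'M[k]_d) (f : 'rV[k]_d -> A),
    phiV \in unitmx /\
    (forall (a : k) (u v : 'rV[k]_d), f (a *: u + v) = a *: f u + f v) /\
    (forall v, maxideal (f v)) /\
    (forall v, f (v *m phiV) = phi (f v)) /\
    (forall x : A, maxideal x -> exists v, mpow 2 (x - f v)).
Proof.
have [Aloc [Acomp cot_fd]] := hA.
have [rs pact_rs rs_eigen] := cotangent_roots Aloc phi_bij cot_fd.
have [n0 hn0] := hres.
have prods_notin j z : (maxn n0 2 <= j.+1)%N -> z \in prods rs j -> z \notin rs.
  move=> le_n_j /mem_prods[ls [size_ls ls_rs] ->]; apply/negP => /rs_eigen.
  apply: hn0 size_ls _ => [|l /ls_rs /rs_eigen //].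
  exact: leq_trans (leq_maxl n0 2) le_n_j.
have [psi psi_monic lift] :=
  exists_annihilated_lifts Aloc Acomp phi_bij pact_rs (leq_maxr n0 2) prods_notin.
have [d [e [e_m e_span]]] := cot_fd.
have /fin_all_exists[w /all_and3[w_m psi_w e_w]] i := lift _ (e_m i).
have [r [phiV [b [phiV_unit b_m phiVP b_onto]]]] :=
  annihilated_span_matrix Aloc phi_bij psi_monic w_m psi_w.
exists r, phiV, (lincomb b); do !split=> //; first exact: linearP.
move=> x /e_span[c x_c]; have [v b_v] := b_onto c; exists v; rewrite b_v.
rewrite -(subrK (\sum_i c i *: e i) x) -addrA -sumrB; apply: mpowD => //.
by apply: mpow_sum => i _; rewrite -scalerBr; apply: mpowZ.
Qed.
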